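(* Let $P_0$ be a domain, $U$ a free $P_0$-module of rank four with dual $U^*=\operatorname{Hom}_{P_0}(U,P_0)$, and $x,y,z,w$ a basis of $U$ with dual basis $x^*,y^*,z^*,w^*$. Let $$\phi_3=ax^{*(2)}y^*+dx^*y^{*(2)}+ey^{*(2)}z^*+fy^{*(2)}w^*+gx^*z^{*(2)}+hy^*z^{*(2)}+iz^{*(2)}w^*+ky^*w^{*(2)}+mx^*y^*z^*+nx^*y^*w^*+py^*z^*w^*\in D_3U^*$$ with parameters in $P_0$. Assume (a) $a\neq0$, (b) $g\neq0$, and (c) $\ell\phi_3\neq0$ for all nonzero $\ell\in U$. Then $\Gamma_{\phi_3}$ is not identically zero.
   Context: $D_iU^*=\operatorname{Hom}_{P_0}(\operatorname{Sym}_iU,P_0)$; $D_\bullet U^*$ is the divided power algebra, a module over $\operatorname{Sym}_\bullet U$ via $(uv)(u')=v(uu')$. The divided power monomial $x^{*(a_1)}y^{*(a_2)}z^{*(a_3)}w^{*(a_4)}$ takes value $1$ on $x^{a_1}y^{a_2}z^{a_3}w^{a_4}$ and $0$ on all other monomials of that degree; a factor without parenthesized exponent has exponent one. $D_4U$ is the degree-$4$ divided power of $U$. For $X\in D_4U$, $\Delta(X)\in U^{\otimes4}$ is its comultiplication: for $X=\ell_1^{(e_1)}\cdots\ell_s^{(e_s)}$ with $\sum e_j=4$, the sum of all distinct words $u_1\otimes\cdots\otimes u_4$ in which the symbol $\ell_j$ occurs exactly $e_j$ times, extended linearly. $\Gamma_{\phi_3}:D_4U\otimes\bigwedge^4U\to\bigwedge^4U^*$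 is the $P_0$-linear map $\Gamma_{\phi_3}(X\otimes y_1\wedge\cdots\wedge y_4)=\sum(u_1y_1\phi_3)\wedge\cdots\wedge(u_4y_4\phi_3)$, summed over the terms of $\Delta(X)$. *)

From mathcomp Require Import all_boot all_order all_algebra.
Set Implicit Arguments. Unset Strict Implicit. Unset Printing Implicit Defensive.
Import GRing.Theory.
Local Open Scope ring_scope.

(* U = P0^4 as row vectors, basis x,y,z,w = the standard unit vectors
   (coordinates 0,1,2,3).  Monomials in Sym U are exponent vectors. *)
Definition mono := {ffun 'I_4 -> nat}.
Definition mdeg (t : mono) : nat := (\sum_i t i)%N.
Definition mk4 (a b c d : nat) : mono := [ffun i : 'I_4 => nth 0%N [:: a; b; c; d] i].
Definition madd1 (t : mono) (i : 'I_4) : mono := [ffun j => (t j + (i == j))%N].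
Definition munit (i : 'I_4) : mono := madd1 (mk4 0 0 0 0) i.

(* An element of D_k U^* = Hom(Sym_k U, P0) is given by its values on the
   degree-k monomials; we represent elements of D U^* as functions mono -> R,
   only the values on degree-k monomials being relevant for D_k U^*. *)
Definition DUs (R : Type) := mono -> R.

(* divided power monomial: value 1 on the monomial t0, 0 on the others *)
Definition dmono (R : nzRingType) (t0 : mono) : DUs R := fun t => (t == t0)%:R.

(* module structure: (u v)(u') = v(u u') *)
Definition contract (R : nzRingType) (u : 'rV[R]_4) (v : DUs R) : DUs R :=
  fun t => \sum_(i < 4) u ord0 i * v (madd1 t i).

Definition Dzero (R : nzRingType) (k : nat) (v : DUs R) : Prop :=
  forall t : mono, mdeg t = k -> v t = 0.

Definition phi3 (R : nzRingType) (a d e f g h i k m n p : R) : DUs R :=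
  fun t =>
    a * dmono R (mk4 2 1 0 0) t + d * dmono R (mk4 1 2 0 0) t
  + e * dmono R (mk4 0 2 1 0) t + f * dmono R (mk4 0 2 0 1) t
  + g * dmono R (mk4 1 0 2 0) t + h * dmono R (mk4 0 1 2 0) t
  + i * dmono R (mk4 0 0 2 1) t + k * dmono R (mk4 0 1 0 2) t
  + m * dmono R (mk4 1 1 1 0) t + n * dmono R (mk4 1 1 0 1) t
  + p * dmono R (mk4 0 1 1 1) t.

(* Gamma_phi evaluated on X (x) y_1 /\ ... /\ y_4, where
   X = l_1^(e_1) ... l_s^(e_s).  The words of Delta(X) are the maps
   w : {1..4} -> {1..s} in which the symbol j occurs exactly e_j times.
   The result lies in /\^4 U^*, free of rank one on x*/\y*/\z*/\w*; we return
   its coordinate: the wedge of four covectors v_1..v_4 is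
   det (v_k(basis_j)) * x*/\y*/\z*/\w*. *)
Definition Gamma (R : comNzRingType) (phi : DUs R) (s : nat)
    (l : 'I_s -> 'rV[R]_4) (e : 'I_s -> nat) (y : 'I_4 -> 'rV[R]_4) : R :=
  \sum_(w : {ffun 'I_4 -> 'I_s} | [forall j, #|[set q | w q == j]| == e j])
    \det (\matrix_(q < 4, j < 4) contract (l (w q)) (contract (y q) phi) (munit j)).

(* Pair Gamma_{phi3} with x/\y/\z/\w and with X = x^(3)y, x^(2)z^(2), z^(4) and xy^(3).
   The first three values are a g (n^2 - a k), (g n - a i)^2 and (i m - g p)^2, the
   fourth a cubic in the coefficients.  If all four vanish then, as a and g are
   nonzero in a domain, a k = n^2, a i = g n, a p = n m and a f = d n, and these are
   exactly the conditions for the nonzero vector n x - a w to annihilate phi3 in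
   D_2 U^*, contradicting (c). *)

From mathcomp Require Import all_boot all_order all_algebra ring zify.
Import GRing.Theory.
Local Open Scope ring_scope.

Definition ix : 'I_4 := @Ordinal 4 0 isT.
Definition iy : 'I_4 := @Ordinal 4 1 isT.
Definition iz : 'I_4 := @Ordinal 4 2 isT.
Definition iw : 'I_4 := @Ordinal 4 3 isT.

Lemma mono_mk4 (t : mono) : t = mk4 (t ix) (t iy) (t iz) (t iw).
Proof. by apply/ffunP => -[[|[|[|[|//]]]] ?]; rewrite ffunE; congr (t _); apply: val_inj. Qed.

Lemma mdeg_mk4 (A B C D : nat) : mdeg (mk4 A B C D) = (A + B + C + D)%N.
Proof. by rewrite /mdeg !big_ord_recl big_ord0 !ffunE /= addn0 !addnA. Qed.

Lemma eq_mk4 (A B C D A' B' C' D' : nat) :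
  (mk4 A B C D == mk4 A' B' C' D') = [&& A == A', B == B', C == C' & D == D']%N.
Proof.
apply/eqP/and4P => [/ffunP eqAD | [/eqP-> /eqP-> /eqP-> /eqP->] //].
by split; apply/eqP; [move: (eqAD ix) | move: (eqAD iy) | move: (eqAD iz) | move: (eqAD iw)];
  rewrite !ffunE.
Qed.

Lemma madd1_mk4 (A B C D : nat) (j : 'I_4) :
  madd1 (mk4 A B C D) j =
  mk4 (A + (j == 0 :> nat)) (B + (j == 1 :> nat)) (C + (j == 2 :> nat)) (D + (j == 3 :> nat)).
Proof.
by apply/ffunP => -[[|[|[|[|//]]]] ?]; rewrite !ffunE; case: j => -[|[|[|[|//]]]].
Qed.

Lemma munit_mk4 (j : 'I_4) :
  munit j = mk4 (j == 0 :> nat) (j == 1 :> nat) (j == 2 :> nat) (j == 3 :> nat).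
Proof. exact: madd1_mk4. Qed.

Lemma contract_delta (R : nzRingType) (j : 'I_4) (v : DUs R) (t : mono) :
  contract (delta_mx 0 j) v t = v (madd1 t j).
Proof.
rewrite /contract (bigD1 j) //= big1 => [|l /negbTE nlj]; last by rewrite mxE nlj mul0r.
by rewrite mxE !eqxx mul1r addr0.
Qed.

Lemma contract_delta_combination (R : comNzRingType) (c1 c2 : R) (j1 j2 : 'I_4)
    (v : DUs R) (t : mono) :
  contract (c1 *: delta_mx 0 j1 - c2 *: delta_mx 0 j2) v t =
  c1 * v (madd1 t j1) - c2 * v (madd1 t j2).
Proof.
rewrite -!contract_delta /contract !mulr_sumr -sumrB.
by apply: eq_bigr => j _; rewrite !mxE; ring.
Qed.

Lemma delta_combination_neq0 (R : nzRingType) (c1 c2 : R) (j1 j2 : 'I_4) :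
  j1 != j2 -> c2 != 0 -> c1 *: delta_mx 0 j1 - c2 *: delta_mx 0 j2 != 0 :> 'rV[R]_4.
Proof.
move=> /negbTE nj12 c2_neq0; apply: contraNneq c2_neq0 => /matrixP /(_ 0 j2).
by rewrite !mxE eq_sym nj12 !eqxx /= mulr0 mulr1 sub0r => /eqP; rewrite oppr_eq0.
Qed.

Section Phi3Coefficients.
Context {R : nzRingType} (a d e f g h i k m n p : R).

Definition phi3_coef (A B C D : nat) : R :=
  match A, B, C, D with
  | 2, 1, 0, 0 => a | 1, 2, 0, 0 => d | 0, 2, 1, 0 => e | 0, 2, 0, 1 => f
  | 1, 0, 2, 0 => g | 0, 1, 2, 0 => h | 0, 0, 2, 1 => i | 0, 1, 0, 2 => k
  | 1, 1, 1, 0 => m | 1, 1, 0, 1 => n | 0, 1, 1, 1 => p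
  | _, _, _, _ => 0
  end.

Lemma phi3_mk4 (A B C D : nat) :
  phi3 a d e f g h i k m n p (mk4 A B C D) = phi3_coef A B C D.
Proof.
rewrite /phi3 /dmono !eq_mk4.
case: A => [|[|[|A]]]; case: B => [|[|[|B]]]; case: C => [|[|[|C]]]; case: D => [|[|[|D]]].
all: by rewrite /= ?mulr0 ?mulr1 ?addr0 ?add0r.
Qed.

End Phi3Coefficients.

Lemma big_ord2 (R : Type) (idx : R) (op : Monoid.law idx) (F : 'I_2 -> R) :
  \big[op/idx]_(r < 2) F r = op (F ord0) (F ord_max).
Proof. by rewrite big_ord_recl big_ord1; congr (op _ (F _)); apply: val_inj. Qed.

Lemma forall_ord2 (P : pred 'I_2) : [forall r, P r] = P ord0 && P ord_max.
Proof.
apply/forallP/andP => [|[P0 P1] [[|[|//]] lt_r2]]; first by split.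
- by rewrite (_ : Ordinal _ = ord0) //; apply: val_inj.
- by rewrite (_ : Ordinal _ = ord_max) //; apply: val_inj.
Qed.

Definition word4 {T : Type} (i0 i1 i2 i3 : T) (q : nat) : T := nth i0 [:: i0; i1; i2; i3] q.

Lemma sum_ffun4 (R : nmodType) (s : nat) (F : {ffun 'I_4 -> 'I_s} -> R) :
  \sum_w F w =
  \sum_(i0 < s) \sum_(i1 < s) \sum_(i2 < s) \sum_(i3 < s)
    F [ffun q : 'I_4 => word4 i0 i1 i2 i3 q].
Proof.
case: s F => [|s] F.
  by rewrite big_ord0 big1 // => w; case: (w ord0).
rewrite !pair_big /=.
pose h (t : 'I_s.+1 * 'I_s.+1 * 'I_s.+1 * 'I_s.+1) :=
  [ffun q : 'I_4 => word4 t.1.1.1 t.1.1.2 t.1.2 t.2 q].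
pose x (j : nat) : 'I_4 := inord j.
rewrite (reindex h) //.
exists (fun w : {ffun 'I_4 -> 'I_s.+1} => (w (x 0), w (x 1), w (x 2), w (x 3)))%N.
  by move=> [[[i0 i1] i2] i3] _; rewrite /h /x !ffunE /word4 !inordK.
move=> w _; apply/ffunP => -[[|[|[|[|//]]]] lt_q4]; rewrite /h ffunE /word4 /=.
all: by congr (w _); apply: val_inj; rewrite /= inordK.
Qed.

Lemma card_word4 (s : nat) (i0 i1 i2 i3 r : 'I_s) :
  #|[set q | [ffun q : 'I_4 => word4 i0 i1 i2 i3 q] q == r]| = count_mem r [:: i0; i1; i2; i3].
Proof.
by rewrite -sum1_card big_mkcond /= !big_ord_recl big_ord0 !inE !ffunE /= addn0.
Qed.

Section Det4.
Context {R : comNzRingType}.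

(* Indexing entries by nat lets concrete determinants reduce by simplification. *)
Definition det4 (F : nat -> nat -> R) : R :=
    F 0 0 * F 1 1 * F 2 2 * F 3 3 - F 0 0 * F 1 1 * F 2 3 * F 3 2
  - F 0 0 * F 1 2 * F 2 1 * F 3 3 + F 0 0 * F 1 2 * F 2 3 * F 3 1
  + F 0 0 * F 1 3 * F 2 1 * F 3 2 - F 0 0 * F 1 3 * F 2 2 * F 3 1
  - F 0 1 * F 1 0 * F 2 2 * F 3 3 + F 0 1 * F 1 0 * F 2 3 * F 3 2
  + F 0 1 * F 1 2 * F 2 0 * F 3 3 - F 0 1 * F 1 2 * F 2 3 * F 3 0
  - F 0 1 * F 1 3 * F 2 0 * F 3 2 + F 0 1 * F 1 3 * F 2 2 * F 3 0
  + F 0 2 * F 1 0 * F 2 1 * F 3 3 - F 0 2 * F 1 0 * F 2 3 * F 3 1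
  - F 0 2 * F 1 1 * F 2 0 * F 3 3 + F 0 2 * F 1 1 * F 2 3 * F 3 0
  + F 0 2 * F 1 3 * F 2 0 * F 3 1 - F 0 2 * F 1 3 * F 2 1 * F 3 0
  - F 0 3 * F 1 0 * F 2 1 * F 3 2 + F 0 3 * F 1 0 * F 2 2 * F 3 1
  + F 0 3 * F 1 1 * F 2 0 * F 3 2 - F 0 3 * F 1 1 * F 2 2 * F 3 0
  - F 0 3 * F 1 2 * F 2 0 * F 3 1 + F 0 3 * F 1 2 * F 2 1 * F 3 0.

Lemma det4E (F : nat -> nat -> R) : \det (\matrix_(q < 4, j < 4) F q j) = det4 F.
Proof.
do 3! rewrite !(expand_det_row _ 0) !big_ord_recl !big_ord0 /cofactor.
by rewrite !det_mx11 !mxE /= /det4; ring.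
Qed.

Lemma eq_det4 (F G : nat -> nat -> R) :
  (forall q j, q < 4 -> j < 4 -> F q j = G q j)%N -> det4 F = det4 G.
Proof. by move=> eqFG; rewrite /det4 !eqFG. Qed.

End Det4.

(* [Gamma2 phi u v eu ev] is Gamma_phi (u^(eu) v^(ev) (x) x/\y/\z/\w). *)
Definition Gamma2 {R : comNzRingType} (phi : DUs R) (u v : 'I_4) (eu ev : nat) : R :=
  Gamma phi (fun r => delta_mx 0 (tnth [tuple u; v] r)) (tnth [tuple eu; ev]) (delta_mx 0).

Lemma Gamma2E (R : comNzRingType) (phi : DUs R) (u v : 'I_4) (eu ev : nat) :
  Gamma2 phi u v eu ev =
  \sum_(i0 < 2) \sum_(i1 < 2) \sum_(i2 < 2) \sum_(i3 < 2)
    if (count_mem ord0 [:: i0; i1; i2; i3] == eu) &&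
       (count_mem ord_max [:: i0; i1; i2; i3] == ev)
    then det4 (fun q j => phi (madd1 (madd1 (munit (inord j))
                          (tnth [tuple u; v] (word4 i0 i1 i2 i3 q))) (inord q)))
    else 0.
Proof.
rewrite /Gamma2 /Gamma big_mkcond sum_ffun4; do 4! apply: eq_bigr => ? _.
rewrite forall_ord2 !card_word4; case: ifP => // _.
rewrite -det4E; congr (\det _); apply/matrixP => q j.
by rewrite !mxE !contract_delta ffunE !inord_val.
Qed.

Section Phi3Gamma.
Context {R : comNzRingType} (a d e f g h i k m n p : R).

Lemma Gamma2_phi3 (u v : 'I_4) (eu ev : nat) :
  Gamma2 (phi3 a d e f g h i k m n p) u v eu ev =
  \sum_(i0 < 2) \sum_(i1 < 2) \sum_(i2 < 2) \sum_(i3 < 2)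
    if (count_mem ord0 [:: i0; i1; i2; i3] == eu) &&
       (count_mem ord_max [:: i0; i1; i2; i3] == ev)
    then det4 (fun q j => let l : nat := (tnth [tuple u; v] (word4 i0 i1 i2 i3 q)) in
      phi3_coef a d e f g h i k m n p
        ((j == 0) + (l == 0) + (q == 0)) ((j == 1) + (l == 1) + (q == 1))
        ((j == 2) + (l == 2) + (q == 2)) ((j == 3) + (l == 3) + (q == 3)))%N
    else 0.
Proof.
rewrite Gamma2E; do 4! apply: eq_bigr => ? _; case: ifP => // _.
apply: eq_det4 => q j lt_q4 lt_j4.
by rewrite munit_mk4 !madd1_mk4 phi3_mk4 !inordK.
Qed.

Let phi := phi3 a d e f g h i k m n p.

Lemma Gamma_x3y : Gamma2 phi ix iy 3 1 = a * g * (n * n - a * k).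
Proof. by rewrite Gamma2_phi3 !big_ord2 /= /det4 /=; ring. Qed.

Lemma Gamma_x2z2 : Gamma2 phi ix iz 2 2 = (g * n - a * i) ^+ 2.
Proof. by rewrite Gamma2_phi3 !big_ord2 /= /det4 /=; ring. Qed.

(* z^(4) is taken as z^(4) w^(0), so that every witness uses two symbols. *)
Lemma Gamma_z4 : Gamma2 phi iz iw 4 0 = (i * m - g * p) ^+ 2.
Proof. by rewrite Gamma2_phi3 !big_ord2 /= /det4 /=; ring. Qed.

Lemma Gamma_xy3 : Gamma2 phi ix iy 1 3 =
  - a * f ^+ 2 * g - d ^+ 2 * g * k + 2 * d * f * g * n + d * k * m ^+ 2
  - 2 * d * m * n * p + d * h * n ^+ 2 - a * d * h * k + a * d * p ^+ 2.
Proof. by rewrite Gamma2_phi3 !big_ord2 /= /det4 /=; ring. Qed.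

End Phi3Gamma.

Section Relations.
Context {R : idomainType} {a d f g h i k m n p : R}.
Hypotheses (a_neq0 : a != 0) (g_neq0 : g != 0).

Lemma vanishing_Gamma_relations :
  a * g * (n * n - a * k) = 0 -> (g * n - a * i) ^+ 2 = 0 -> (i * m - g * p) ^+ 2 = 0 ->
  - a * f ^+ 2 * g - d ^+ 2 * g * k + 2 * d * f * g * n + d * k * m ^+ 2
    - 2 * d * m * n * p + d * h * n ^+ 2 - a * d * h * k + a * d * p ^+ 2 = 0 ->
  [/\ a * k = n * n, a * i = g * n, a * p = n * m & a * f = d * n].
Proof.
move=> /eqP G1 /eqP G2 /eqP G3 G4.
have Ek : a * k = n * n.
  apply/eqP; move: G1.
  by rewrite !mulf_eq0 (negbTE a_neq0) (negbTE g_neq0) subr_eq0 eq_sym.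
have Ei : a * i = g * n by apply/eqP; move: G2; rewrite expf_eq0 subr_eq0 eq_sym.
have Eim : i * m = g * p by apply/eqP; move: G3; rewrite expf_eq0 subr_eq0.
have Ep : a * p = n * m.
  apply/eqP; suff : g * (a * p - n * m) == 0 by rewrite mulf_eq0 (negbTE g_neq0) subr_eq0.
  have -> : g * (a * p - n * m) = m * (a * i - g * n) + a * (g * p - i * m) by ring.
  by rewrite Ei Eim !subrr !mulr0 addr0.
have Ef : a * f = d * n.
  apply/eqP; suff : g * (a * f - d * n) ^+ 2 == 0.
    by rewrite mulf_eq0 (negbTE g_neq0) expf_eq0 subr_eq0.
  have -> : g * (a * f - d * n) ^+ 2 = - a * (- a * f ^+ 2 * g - d ^+ 2 * g * k
      + 2 * d * f * g * n + d * k * m ^+ 2 - 2 * d * m * n * p + d * h * n ^+ 2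
      - a * d * h * k + a * d * p ^+ 2)
    + (d ^+ 2 * g + a * d * h - d * m ^+ 2) * (n * n - a * k) + d * (n * m - a * p) ^+ 2.
    by ring.
  by rewrite G4 Ek Ep !subrr; apply/eqP; ring.
by split.
Qed.

End Relations.

Lemma Dzero_contract_phi3 (R : comNzRingType) (a d e f g h i k m n p : R) :
  a * k = n * n -> a * i = g * n -> a * p = n * m -> a * f = d * n ->
  Dzero 2 (contract (n *: delta_mx 0 ix - a *: delta_mx 0 iw) (phi3 a d e f g h i k m n p)).
Proof.
move=> Ek Ei Ep Ef t; rewrite (mono_mk4 t) mdeg_mk4.
move: (t ix) (t iy) (t iz) (t iw) => A B C D deg2.
rewrite contract_delta_combination !madd1_mk4 !phi3_mk4 /=.
case: A deg2 => [|[|[|A]]]; case: B => [|[|[|B]]]; case: C => [|[|[|C]]]; case: D => [|[|[|D]]].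
all: move=> deg2; try by exfalso; lia.
all: by rewrite /= ?Ek ?Ei ?Ep ?Ef; ring.
Qed.

Theorem proposition6p3 (P0 : idomainType) (a d e f g h i k m n p : P0) :
  a != 0 -> g != 0 ->
  (forall l : 'rV[P0]_4, l != 0 ->
     ~ Dzero 2 (contract l (phi3 a d e f g h i k m n p))) ->
  exists (s : nat) (l : 'I_s -> 'rV[P0]_4) (ex : 'I_s -> nat) (y : 'I_4 -> 'rV[P0]_4),
    (\sum_(j < s) ex j)%N = 4%N /\
    Gamma (phi3 a d e f g h i k m n p) l ex y != 0.
Proof.
move=> a_neq0 g_neq0 no_annihilator.
pose phi := phi3 a d e f g h i k m n p.
have witness u v eu ev : (eu + ev = 4)%N -> Gamma2 phi u v eu ev != 0 ->
    exists s l ex y, (\sum_(j < s) ex j)%N = 4%N /\ Gamma phi l ex y != 0.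
  move=> euv G_neq0; exists 2%N, (fun r => delta_mx 0 (tnth [tuple u; v] r)).
  by exists (tnth [tuple eu; ev]), (delta_mx 0); rewrite big_ord2.
have [G1|] := eqVneq (Gamma2 phi ix iy 3 1) 0; last exact: witness.
have [G2|] := eqVneq (Gamma2 phi ix iz 2 2) 0; last exact: witness.
have [G3|] := eqVneq (Gamma2 phi iz iw 4 0) 0; last exact: witness.
have [G4|] := eqVneq (Gamma2 phi ix iy 1 3) 0; last exact: witness.
rewrite Gamma_x3y in G1; rewrite Gamma_x2z2 in G2.
rewrite Gamma_z4 in G3; rewrite Gamma_xy3 in G4.
have [Ek Ei Ep Ef] := vanishing_Gamma_relations a_neq0 g_neq0 G1 G2 G3 G4.
case: (no_annihilator (n *: delta_mx 0 ix - a *: delta_mx 0 iw)).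
  exact: delta_combination_neq0.
exact: Dzero_contract_phi3.
Qed.
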